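(* Let $K_0,K_1>0$, $\alpha\geq-2$ and $p>1$. Let $F\in\mathcal{C}^2([0,T))$ satisfy $$\ddot F(t)+K_0(1+t)^{-1}\dot F(t)\geq K_1(1+t)^{\alpha}|F(t)|^p\quad\text{for all } t\in[0,T).$$ If $F(0)>0$ and $\dot F(0)>0$, then $T<\infty$, i.e. $F$ blows up in finite time (cannot be extended as such a function to all of $[0,\infty)$). *)

From Stdlib Require Import Reals Lra.
From Coquelicot Require Import Coquelicot.
Open Scope R_scope.

(* |x|^p for real exponent p > 0, with the convention 0^p = 0
   (Stdlib's Rpower 0 p is not 0). *)
Definition abspow (x p : R) : R :=
  if Req_EM_T x 0 then 0 else Rpower (Rabs x) p.

Definition C2_on_0T (T : Rbar) (F F1 F2 : R -> R) : Prop :=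
  (forall t, 0 < t -> Rbar_lt t T ->
     is_derive F t (F1 t) /\ is_derive F1 t (F2 t) /\ continuous F2 t) /\
  filterlim (fun h => (F h - F 0) / h) (at_right 0) (locally (F1 0)) /\
  filterlim (fun h => (F1 h - F1 0) / h) (at_right 0) (locally (F2 0)) /\
  filterlim F2 (at_right 0) (locally (F2 0)).

From Stdlib Require Import Reals Lra.
From Coquelicot Require Import Coquelicot.
Open Scope R_scope.

(* With 1 + t = e^s, the function G(s) = F(e^s - 1) satisfies the
   autonomous inequality G'' + (K0 - 1) G' >= K1 |G|^p (this is where
   alpha >= -2 enters: e^((alpha + 2) s) >= 1).
   For any damping k, multiplying by e^(c s) for suitable c shows successively
   G' > 0, G' >= nu G and G'^2 >= lambda G^(p+1) for small nu, lambda > 0.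
   Hence G' >= mu G^((p+1)/2), so G^(-(p-1)/2) + (p-1)/2 mu s is nonincreasing
   while staying positive, which is impossible on an unbounded interval.
   Derivatives are only two-sided for t > 0, so one starts at some t0 > 0
   where F and F' are still positive. *)

Lemma Rpower_pos (x y : R) : 0 < Rpower x y.
Proof. apply exp_pos. Qed.

Lemma Rpower_plus_1 (x y : R) : 0 < x -> Rpower x (y + 1) = Rpower x y * x.
Proof. intros Hx. now rewrite Rpower_plus, Rpower_1. Qed.

Lemma Rpower_mul_half (x y : R) : Rpower x (y / 2) * Rpower x (y / 2) = Rpower x y.
Proof. rewrite <- Rpower_plus. f_equal. field. Qed.

Lemma abspow_nonneg (x p : R) : 0 <= abspow x p.
Proof. unfold abspow. destruct (Req_EM_T x 0); [lra | apply Rlt_le, Rpower_pos]. Qed.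

Lemma abspow_pos (x p : R) : 0 < x -> abspow x p = Rpower x p.
Proof.
  intros Hx. unfold abspow. destruct (Req_EM_T x 0); [lra |].
  now rewrite Rabs_pos_eq by lra.
Qed.

Lemma is_derive_Rpower (f : R -> R) (x df y : R) : 0 < f x -> is_derive f x df ->
  is_derive (fun t => Rpower (f t) y) x (y * Rpower (f x) (y - 1) * df).
Proof.
  intros Hpos Hf. rewrite Rmult_comm.
  apply (is_derive_comp (fun z => Rpower z y) f); [| exact Hf].
  now apply is_derive_Reals, derivable_pt_lim_power.
Qed.

Lemma is_derive_exp_time_change (f df : R -> R) (s : R) :
  is_derive f (exp s - 1) (df (exp s - 1)) ->
  is_derive (fun s => f (exp s - 1)) s (exp s * df (exp s - 1)).
Proof.
  intros Hf. apply (is_derive_comp f (fun s => exp s - 1)); [exact Hf |].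
  auto_derive; [easy | ring].
Qed.

Lemma is_derive_exp_mul_time_change (f df : R -> R) (s : R) :
  is_derive f (exp s - 1) (df (exp s - 1)) ->
  is_derive (fun s => exp s * f (exp s - 1)) s
    (exp s * (f (exp s - 1) + exp s * df (exp s - 1))).
Proof.
  intros Hf.
  replace (exp s * (f (exp s - 1) + exp s * df (exp s - 1)))
    with (exp s * f (exp s - 1) + exp s * (exp s * df (exp s - 1))) by ring.
  apply (is_derive_mult (K := R_AbsRing) exp (fun s => f (exp s - 1))).
  - apply is_derive_exp.
  - now apply is_derive_exp_time_change.
  - intros; apply Rmult_comm.
Qed.

Lemma nondecreasing_of_is_derive_nonneg (g dg : R -> R) (a : R) :
  (forall x, a <= x -> is_derive g x (dg x)) -> (forall x, a <= x -> 0 <= dg x) ->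
  forall x y, a <= x -> x <= y -> g x <= g y.
Proof.
  intros Hd Hpos x y Hx Hxy.
  destruct (MVT_gen g x y dg) as [c [Hc Heq]].
  - intros z Hz. apply Hd. rewrite Rmin_left in Hz by lra. lra.
  - intros z Hz. rewrite Rmin_left in Hz by lra. apply continuity_pt_filterlim.
    apply (ex_derive_continuous (V := R_NormedModule)). exists (dg z). apply Hd. lra.
  - rewrite Rmin_left, Rmax_right in Hc by lra.
    assert (0 <= dg c) by (apply Hpos; lra).
    nra.
Qed.

Lemma exp_weighted_nondecreasing (h dh : R -> R) (c a : R) :
  (forall s, a <= s -> is_derive h s (dh s)) ->
  (forall s, a <= s -> 0 <= dh s + c * h s) ->
  forall s, a <= s -> exp (c * a) * h a <= exp (c * s) * h s.
Proof.
  intros Hd Hpos s Has.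
  apply (nondecreasing_of_is_derive_nonneg (fun s => exp (c * s) * h s)
           (fun s => exp (c * s) * (dh s + c * h s)) a); try lra.
  - intros x Hx.
    replace (exp (c * x) * (dh x + c * h x)) with (c * exp (c * x) * h x + exp (c * x) * dh x)
      by ring.
    apply (is_derive_mult (K := R_AbsRing) (fun s => exp (c * s)) h).
    + auto_derive; [easy | ring].
    + now apply Hd.
    + intros; apply Rmult_comm.
  - intros x Hx. apply Rmult_le_pos; [apply Rlt_le, exp_pos | now apply Hpos].
Qed.

Lemma pos_of_derive_add_scal_nonneg (h dh : R -> R) (c a : R) :
  (forall s, a <= s -> is_derive h s (dh s)) ->
  (forall s, a <= s -> 0 <= dh s + c * h s) ->
  0 < h a -> forall s, a <= s -> 0 < h s.
Proof.
  intros Hd Hpos Ha s Has.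
  assert (Hw := exp_weighted_nondecreasing h dh c a Hd Hpos s Has).
  assert (Hea := exp_pos (c * a)). assert (Hes := exp_pos (c * s)). nra.
Qed.

Lemma nonneg_of_derive_add_scal_nonneg (h dh : R -> R) (c a : R) :
  (forall s, a <= s -> is_derive h s (dh s)) ->
  (forall s, a <= s -> 0 <= dh s + c * h s) ->
  0 <= h a -> forall s, a <= s -> 0 <= h s.
Proof.
  intros Hd Hpos Ha s Has.
  assert (Hw := exp_weighted_nondecreasing h dh c a Hd Hpos s Has).
  assert (Hea := exp_pos (c * a)). assert (Hes := exp_pos (c * s)). nra.
Qed.

Lemma filterlim_at_right_id (x : R) : filterlim (fun h => h) (at_right x) (locally x).
Proof. eapply filterlim_filter_le_1; [apply filter_le_within | apply filterlim_id]. Qed.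

Lemma right_continuous_of_diff_quot (f : R -> R) (l : R) :
  filterlim (fun h => (f h - f 0) / h) (at_right 0) (locally l) ->
  filterlim f (at_right 0) (locally (f 0)).
Proof.
  intros Hq.
  apply filterlim_ext_loc with (fun h => f 0 + h * ((f h - f 0) / h)).
  { exists (mkposreal 1 Rlt_0_1); intros h _ Hh. field. lra. }
  replace (locally (f 0)) with (locally (f 0 + 0 * l)) by (f_equal; ring).
  eapply (filterlim_comp_2 (fun _ => f 0) (fun h => h * ((f h - f 0) / h)) Rplus).
  - apply filterlim_const.
  - apply (filterlim_comp_2 (fun h => h) _ Rmult (filterlim_at_right_id 0) Hq).
    apply (filterlim_mult (K := R_AbsRing)).
  - apply (filterlim_plus (V := R_NormedModule) (f 0) (0 * l)).
Qed.

Lemma at_right_0_pos_of_diff_quot (f : R -> R) (l : R) :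
  0 < f 0 -> filterlim (fun h => (f h - f 0) / h) (at_right 0) (locally l) ->
  at_right 0 (fun h => 0 < f h).
Proof.
  intros Hf0 Hq. apply (right_continuous_of_diff_quot f l Hq (fun y => 0 < y)).
  now apply open_gt.
Qed.

Lemma at_right_gt (x : R) : at_right x (fun y => x < y).
Proof. now exists (mkposreal 1 Rlt_0_1). Qed.

Lemma at_right_0_mul_le (b c : R) : 0 < b -> at_right 0 (fun e => e * c <= b).
Proof.
  intros Hb. assert (Hc : 0 < Rabs c + 1) by (generalize (Rabs_pos c); lra).
  exists (mkposreal _ (Rdiv_lt_0_compat _ _ Hb Hc)). intros e He He0.
  change (Rabs (e - 0) < b / (Rabs c + 1)) in He.
  rewrite Rminus_0_r, Rabs_pos_eq in He by lra. apply Rlt_div_r in He; [| lra].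
  generalize (Rle_abs c). nra.
Qed.

Lemma superlinear_growth_no_global_solution (G G1 : R -> R) (a mu q : R) :
  0 < mu -> 1 < q ->
  (forall s, a <= s -> is_derive G s (G1 s)) ->
  (forall s, a <= s -> 0 < G s) ->
  (forall s, a <= s -> mu * Rpower (G s) q <= G1 s) -> False.
Proof.
  intros Hmu Hq HG Hpos Hgrowth.
  set (phi := fun s => - Rpower (G s) (1 - q) - (q - 1) * mu * s).
  assert (Hphi : forall s, a <= s -> phi a <= phi s).
  { intros s Hs. apply (nondecreasing_of_is_derive_nonneg phi
        (fun s => - ((1 - q) * Rpower (G s) (1 - q - 1) * G1 s) - (q - 1) * mu) a);
      [| | lra | lra].
    - intros x Hx.
      apply (is_derive_minus (fun s => - Rpower (G s) (1 - q)) (fun s => (q - 1) * mu * s)).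
      + apply (is_derive_opp (fun s => Rpower (G s) (1 - q))).
        apply is_derive_Rpower; [apply Hpos | apply HG]; lra.
      + auto_derive; [easy | ring].
    - intros x Hx.
      assert (Hinv : Rpower (G x) (1 - q - 1) * Rpower (G x) q = 1).
      { rewrite <- Rpower_plus. replace (1 - q - 1 + q) with 0 by ring.
        apply Rpower_O, Hpos; lra. }
      assert (Hw := Rpower_pos (G x) (1 - q - 1)).
      assert (Hmu_le : mu <= Rpower (G x) (1 - q - 1) * G1 x).
      { replace mu with (Rpower (G x) (1 - q - 1) * (mu * Rpower (G x) q))
          by (rewrite <- Rmult_assoc, (Rmult_comm _ mu), Rmult_assoc, Hinv; ring).
        apply Rmult_le_compat_l; [lra | now apply Hgrowth]. }
      nra. }
  set (s := a + Rpower (G a) (1 - q) / ((q - 1) * mu) + 1).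
  assert (Has : a <= s).
  { assert (0 <= Rpower (G a) (1 - q) / ((q - 1) * mu)).
    { apply Rlt_le, Rdiv_lt_0_compat; [apply Rpower_pos | nra]. }
    unfold s; lra. }
  assert (Hs := Hphi s Has). unfold phi in Hs.
  assert (E : (q - 1) * mu * (s - a) = Rpower (G a) (1 - q) + (q - 1) * mu)
    by (unfold s; field; lra).
  assert (Hw := Rpower_pos (G s) (1 - q)).
  nra.
Qed.

Section DampedSuperlinearInequality.

Variables (k K1 p a : R) (G G1 G2 : R -> R).
Hypotheses (HK1 : 0 < K1) (Hp : 1 < p).
Hypothesis HG : forall s, a <= s -> is_derive G s (G1 s).
Hypothesis HG1 : forall s, a <= s -> is_derive G1 s (G2 s).
Hypothesis Hineq : forall s, a <= s -> K1 * abspow (G s) p <= G2 s + k * G1 s.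
Hypotheses (HGa : 0 < G a) (HG1a : 0 < G1 a).

Lemma G1_pos s : a <= s -> 0 < G1 s.
Proof.
  apply (pos_of_derive_add_scal_nonneg G1 G2 k a HG1); [| exact HG1a].
  intros x Hx. generalize (Hineq x Hx) (abspow_nonneg (G x) p). nra.
Qed.

Lemma G_ge_G_a s : a <= s -> G a <= G s.
Proof.
  intros Hs. apply (nondecreasing_of_is_derive_nonneg G G1 a HG); [| lra | exact Hs].
  intros x Hx. now apply Rlt_le, G1_pos.
Qed.

Lemma G_pos s : a <= s -> 0 < G s.
Proof. intros Hs. generalize (G_ge_G_a s Hs). lra. Qed.

Lemma exists_G1_ge_mul_G : exists nu, 0 < nu /\ forall s, a <= s -> nu * G s <= G1 s.
Proof.
  assert (HKa : 0 < K1 * Rpower (G a) (p - 1)).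
  { apply Rmult_lt_0_compat; [lra | apply Rpower_pos]. }
  destruct (filter_ex _ (filter_and _ _ (at_right_gt 0)
              (filter_and _ _ (at_right_0_mul_le 1 1 Rlt_0_1)
              (filter_and _ _ (at_right_0_mul_le _ (Rabs k + 1) HKa)
                              (at_right_0_mul_le _ (G a) HG1a)))))
    as [nu [Hnu [Hnu1 [HnuK HnuG]]]].
  exists nu; split; [exact Hnu |]. intros s Hs.
  enough (0 <= G1 s - nu * G s) by lra.
  apply (nonneg_of_derive_add_scal_nonneg (fun s => G1 s - nu * G s)
           (fun s => G2 s - nu * G1 s) (k + nu) a); [| | lra | exact Hs].
  - intros x Hx. apply (is_derive_minus G1 (fun s => nu * G s)).
    + now apply HG1.
    + now apply is_derive_scal, HG.
  - intros x Hx. assert (HGx := G_pos x Hx).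
    assert (Hsplit : Rpower (G x) p = Rpower (G x) (p - 1) * G x).
    { rewrite <- Rpower_plus_1 by lra. f_equal. ring. }
    assert (Hmono : Rpower (G a) (p - 1) <= Rpower (G x) (p - 1)).
    { apply Rle_Rpower_l; [lra | split; [lra | now apply G_ge_G_a]]. }
    assert (Hi := Hineq x Hx). rewrite abspow_pos, Hsplit in Hi by lra.
    assert (Hcoef : (k + nu) * nu <= K1 * Rpower (G x) (p - 1)).
    { generalize (Rle_abs k). nra. }
    assert ((k + nu) * nu * G x <= K1 * Rpower (G x) (p - 1) * G x).
    { apply Rmult_le_compat_r; lra. }
    lra.
Qed.

Lemma exists_G1_sq_ge_Rpower : exists lam, 0 < lam /\
  forall s, a <= s -> lam * Rpower (G s) (p + 1) <= G1 s * G1 s.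
Proof.
  destruct exists_G1_ge_mul_G as [nu [Hnu HnuG]].
  assert (HKnu : 0 < K1 * nu) by nra.
  assert (HG1a2 : 0 < G1 a * G1 a) by nra.
  destruct (filter_ex _ (filter_and _ _ (at_right_gt 0)
              (filter_and _ _ (at_right_0_mul_le _ (p + 1) HK1)
              (filter_and _ _ (at_right_0_mul_le _ (2 * Rabs k) HKnu)
                              (at_right_0_mul_le _ (Rpower (G a) (p + 1)) HG1a2)))))
    as [lam [Hlam [HlamK [Hlamk HlamG]]]].
  exists lam; split; [exact Hlam |]. intros s Hs.
  enough (0 <= G1 s * G1 s - lam * Rpower (G s) (p + 1)) by lra.
  apply (nonneg_of_derive_add_scal_nonneg
           (fun s => G1 s * G1 s - lam * Rpower (G s) (p + 1))
           (fun s => G2 s * G1 s + G1 s * G2 s - lam * ((p + 1) * Rpower (G s) (p + 1 - 1) * G1 s))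
           (2 * k) a); [| | lra | exact Hs].
  - intros x Hx.
    apply (is_derive_minus (fun s => G1 s * G1 s) (fun s => lam * Rpower (G s) (p + 1))).
    + apply (is_derive_mult (K := R_AbsRing) G1 G1); [now apply HG1 | now apply HG1 |].
      intros; apply Rmult_comm.
    + apply is_derive_scal, is_derive_Rpower; [apply G_pos | apply HG]; lra.
  - intros x Hx. assert (HGx := G_pos x Hx). assert (HG1x := G1_pos x Hx).
    replace (p + 1 - 1) with p by ring.
    set (P := Rpower (G x) p).
    assert (HP : 0 < P) by apply Rpower_pos.
    assert (Hsplit : Rpower (G x) (p + 1) = P * G x) by now apply Rpower_plus_1.
    rewrite Hsplit.
    assert (Hi := Hineq x Hx). rewrite abspow_pos in Hi by lra. fold P in Hi.
    assert (H1 : 2 * G1 x * (K1 * P) <= 2 * G1 x * (G2 x + k * G1 x)).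
    { apply Rmult_le_compat_l; lra. }
    assert (H2 : lam * (p + 1) * (P * G1 x) <= K1 * (P * G1 x)).
    { apply Rmult_le_compat_r; nra. }
    assert (H3 : 2 * k * lam * (P * G x) <= K1 * nu * (P * G x)).
    { apply Rmult_le_compat_r; [nra | generalize (Rle_abs k); nra]. }
    assert (H4 : K1 * nu * (P * G x) <= K1 * (P * G1 x)).
    { replace (K1 * nu * (P * G x)) with (K1 * P * (nu * G x)) by ring.
      replace (K1 * (P * G1 x)) with (K1 * P * G1 x) by ring.
      apply Rmult_le_compat_l; [nra | now apply HnuG]. }
    nra.
Qed.

Lemma exists_G1_ge_Rpower : exists mu, 0 < mu /\
  forall s, a <= s -> mu * Rpower (G s) ((p + 1) / 2) <= G1 s.
Proof.
  destruct exists_G1_sq_ge_Rpower as [lam [Hlam Hsq]].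
  exists (sqrt lam); split; [now apply sqrt_lt_R0 |]. intros s Hs.
  assert (Hsqs := Hsq s Hs).
  rewrite <- (sqrt_sqrt lam), <- (Rpower_mul_half (G s) (p + 1)) in Hsqs by lra.
  generalize (sqrt_lt_R0 lam Hlam) (G1_pos s Hs) (Rpower_pos (G s) ((p + 1) / 2)).
  nra.
Qed.

Theorem damped_superlinear_no_global_solution : False.
Proof.
  destruct exists_G1_ge_Rpower as [mu [Hmu Hgrowth]].
  apply (superlinear_growth_no_global_solution G G1 a mu ((p + 1) / 2)); try lra.
  - exact HG.
  - exact G_pos.
  - exact Hgrowth.
Qed.

End DampedSuperlinearInequality.

Lemma damped_ineq_exp_time_change (K0 K1 alpha p u f f1 f2 : R) :
  0 <= K1 -> -2 <= alpha -> 1 <= u ->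
  f2 + K0 * / u * f1 >= K1 * Rpower u alpha * abspow f p ->
  K1 * abspow f p <= u * (f1 + u * f2) + (K0 - 1) * (u * f1).
Proof.
  intros HK1 Halpha Hu Hineq.
  assert (HP := abspow_nonneg f p).
  assert (Hweight : 1 <= Rpower u alpha * (u * u)).
  { replace (u * u) with (Rpower u (INR 2)) by (rewrite Rpower_pow by lra; simpl; ring).
    rewrite <- Rpower_plus, <- (Rpower_O u) by lra.
    apply Rle_Rpower; [lra | simpl; lra]. }
  replace (u * (f1 + u * f2) + (K0 - 1) * (u * f1)) with (u * u * (f2 + K0 * / u * f1))
    by (field; lra).
  assert (K1 * abspow f p <= u * u * (K1 * Rpower u alpha * abspow f p)).
  { replace (u * u * (K1 * Rpower u alpha * abspow f p))
      with (Rpower u alpha * (u * u) * (K1 * abspow f p)) by ring.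
    assert (0 <= K1 * abspow f p) by (apply Rmult_le_pos; lra).
    nra. }
  assert (u * u * (K1 * Rpower u alpha * abspow f p) <= u * u * (f2 + K0 * / u * f1)).
  { apply Rmult_le_compat_l; nra. }
  lra.
Qed.

Theorem lemma7p1 (K0 K1 alpha p : R) (T : Rbar) (F F1 F2 : R -> R) :
  0 < K0 -> 0 < K1 -> -2 <= alpha -> 1 < p ->
  Rbar_lt 0 T ->
  C2_on_0T T F F1 F2 ->
  (forall t, 0 <= t -> Rbar_lt t T ->
     F2 t + K0 * / (1 + t) * F1 t >= K1 * Rpower (1 + t) alpha * abspow (F t) p) ->
  0 < F 0 -> 0 < F1 0 ->
  Rbar_lt T p_infty.
Proof.
  intros _ HK1 Halpha Hp HT [HC [HF [HF1 _]]] Hineq HF0 HF10.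
  destruct T as [T| |]; [exact I | exfalso | contradiction].
  destruct (filter_ex _ (filter_and _ _ (at_right_gt 0)
              (filter_and _ _ (at_right_0_pos_of_diff_quot F _ HF0 HF)
                              (at_right_0_pos_of_diff_quot F1 _ HF10 HF1))))
    as [t0 [Ht0 [HFt0 HF1t0]]].
  assert (Ht : forall s, ln (1 + t0) <= s -> 0 < exp s - 1).
  { intros s Hs. assert (Hln := ln_increasing 1 (1 + t0) Rlt_0_1 ltac:(lra)).
    rewrite ln_1 in Hln. generalize (exp_ineq1_le s). lra. }
  apply (damped_superlinear_no_global_solution (K0 - 1) K1 p (ln (1 + t0))
    (fun s => F (exp s - 1)) (fun s => exp s * F1 (exp s - 1))
    (fun s => exp s * (F1 (exp s - 1) + exp s * F2 (exp s - 1)))); try lra.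
  - intros s Hs. apply is_derive_exp_time_change, HC; [now apply Ht | easy].
  - intros s Hs. apply is_derive_exp_mul_time_change, HC; [now apply Ht | easy].
  - intros s Hs. apply damped_ineq_exp_time_change with alpha; try lra.
    + generalize (Ht s Hs); lra.
    + assert (Hi := Hineq (exp s - 1) ltac:(generalize (Ht s Hs); lra) I).
      now replace (1 + (exp s - 1)) with (exp s) in Hi by ring.
  - rewrite exp_ln by lra. now replace (1 + t0 - 1) with t0 by ring.
  - rewrite exp_ln by lra. replace (1 + t0 - 1) with t0 by ring. nra.
Qed.
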